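(* Let $(X,T)$ be a minimal Cantor system which is topologically conjugate via $\varphi:X\to U$ to the induced system $(U,T_U)$, where $U\subsetneq X$ is clopen. Then for every $k\ge0$, the restriction $\varphi|_{\varphi^k(X)}$ is a conjugacy from the induced system $(\varphi^k(X),T_{\varphi^k(X)})$ to the induced system $(\varphi^{k+1}(X),T_{\varphi^{k+1}(X)})$. In particular $(X,T)$ and $(\varphi^k(X),T_{\varphi^k(X)})$ are conjugate by $\varphi^k$.
   Context: A minimal Cantor system is a pair $(X,T)$, $X$ a Cantor set, $T$ a homeomorphism with all orbits dense. For a clopen $V\subset X$, $r_V(x)=\inf\{n>0:T^nx\in V\}$ and the induced map is $T_V:V\to V$, $T_V(x)=T^{r_V(x)}(x)$. *)

From HB Require Import structures.
From mathcomp Require Import all_boot all_order all_algebra.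
From mathcomp Require Import all_classical all_reals topology cantor.
Set Implicit Arguments. Unset Strict Implicit. Unset Printing Implicit Defensive.
Local Open Scope classical_set_scope.

Definition homeomorphism {X : topologicalType} (T : X -> X) : Prop :=
  exists g : X -> X, [/\ cancel T g, cancel g T, continuous T & continuous g].

Definition orbit {X : Type} (T : X -> X) (x : X) : set X :=
  [set y | exists n : nat, iter n T x = y \/ iter n T y = x].

Definition minimal_system {X : topologicalType} (T : X -> X) : Prop :=
  homeomorphism T /\ forall x : X, closure (orbit T x) = [set: X].

(* r_V(x) = inf { n > 0 : T^n x \in V }; when this set is empty we set it
   to 0 (the induced map is then the identity at x; this never happens for
   x in a nonempty clopen V of a minimal system). *)
Definition return_time {X : Type} (T : X -> X) (V : set X) (x : X) : nat :=
  xget 0%N [set n : nat | [/\ (0 < n)%N, V (iter n T x) &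
     forall m : nat, (0 < m)%N -> V (iter m T x) -> (n <= m)%N]].

Definition induced {X : Type} (T : X -> X) (V : set X) : X -> X :=
  fun x => iter (return_time T V x) T x.

Definition conj_on {X : topologicalType} (V W : set X) (S R f : X -> X) : Prop :=
  [/\ set_bij V W f,
      {within V, continuous f},
      (exists g : X -> X, [/\ {within W, continuous g},
          {in V, forall x, g (f x) = x} &
          {in W, forall y, f (g y) = y}]) &
      {in V, forall x, f (S x) = R (f x)}].

From Pilot Require Import Defs.
From HB Require Import structures.
From mathcomp Require Import all_boot all_order all_algebra.
From mathcomp Require Import all_classical all_reals topology cantor.
From mathcomp Require Import zify.
Set Implicit Arguments. Unset Strict Implicit. Unset Printing Implicit Defensive.
Local Open Scope classical_set_scope.

(* A point of [U] that never returns to [U] is fixed by [T_U], so its preimage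
   under [phi] would be a fixed point of the minimal map [T], impossible on a
   space with two points; hence [T] returns to [U] from every point of [U].
   For such [U] and [W] inside [U], inducing twice is inducing once,
   [(T_U)_W = T_W], because the iterates of [T_U] at [y] enumerate exactly the
   visits of the [T]-orbit of [y] to [U].  Transporting along [phi] then gives
   [phi \o T_A = (T_U)_(phi A) \o phi = T_(phi A) \o phi] for every [A]; for
   [A = phi^k X] this is the first claim, and composing these conjugacies
   gives the second. *)

Definition returns_to {X : Type} (T : X -> X) (V : set X) : Prop :=
  forall x, V x -> exists2 n, (0 < n)%N & V (iter n T x).

Section ReturnTime.
Variables (X : Type) (T : X -> X) (V : set X) (x : X).

Lemma return_time_eq n : (0 < n)%N -> V (iter n T x) ->
  (forall m, (0 < m)%N -> V (iter m T x) -> (n <= m)%N) -> return_time T V x = n.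
Proof.
move=> n_gt0 Vn n_min; apply: xget_unique; first by split.
by move=> m [m_gt0 Vm m_min]; apply/eqP; rewrite eqn_leq n_min // m_min.
Qed.

Lemma return_time_eq0 : (forall n, (0 < n)%N -> ~ V (iter n T x)) ->
  return_time T V x = 0%N.
Proof. by move=> never; apply: xgetPN => n [n_gt0 Vn _]; exact: never Vn. Qed.

Lemma return_timeP : (exists2 n, (0 < n)%N & V (iter n T x)) ->
  [/\ (0 < return_time T V x)%N, V (iter (return_time T V x) T x) &
     forall m, (0 < m)%N -> V (iter m T x) -> (return_time T V x <= m)%N].
Proof.
move=> [n n_gt0 Vn].
have ex_n : exists n, (0 < n)%N && `[< V (iter n T x)>].
  by exists n; rewrite n_gt0; apply/asboolP.
case: (ex_minnP ex_n) => t /andP[t_gt0 /asboolP Vt] t_min.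
have t_min' m : (0 < m)%N -> V (iter m T x) -> (t <= m)%N.
  by move=> m_gt0 Vm; apply: t_min; rewrite m_gt0; apply/asboolP.
by rewrite (return_time_eq t_gt0 Vt t_min').
Qed.

Lemma returns_of_induced_neq : induced T V x <> x ->
  exists2 n, (0 < n)%N & V (iter n T x).
Proof.
move=> moved; apply: contrapT => never; apply: moved.
by rewrite /induced return_time_eq0 // => n n_gt0 Vn; apply: never; exists n.
Qed.

End ReturnTime.

Lemma induced_setT (X : Type) (T : X -> X) : induced T [set: X] = T.
Proof. by apply/funext => x; rewrite /induced (@return_time_eq _ _ _ _ 1%N). Qed.

Lemma induced_conj (X Y : Type) (T : X -> X) (S : Y -> Y) (phi : X -> Y) (V : set X) :
  injective phi -> (forall x, phi (T x) = S (phi x)) ->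
  forall x, induced S (phi @` V) (phi x) = phi (induced T V x).
Proof.
move=> phi_inj phi_comm x.
have iterS_phi n : iter n S (phi x) = phi (iter n T x).
  by elim: n => //= n ->; rewrite phi_comm.
have memV z : (phi @` V) (phi z) = V z.
  by rewrite propeqE; split => [[w Vw /phi_inj <-]|Vz] //; exists z.
have memS n : (phi @` V) (iter n S (phi x)) <-> V (iter n T x).
  by rewrite iterS_phi memV.
rewrite /induced /return_time.
have -> : [set n : nat | [/\ (0 < n)%N, (phi @` V) (iter n S (phi x)) &
    forall m, (0 < m)%N -> (phi @` V) (iter m S (phi x)) -> (n <= m)%N]] =
  [set n : nat | [/\ (0 < n)%N, V (iter n T x) &
    forall m, (0 < m)%N -> V (iter m T x) -> (n <= m)%N]].
  apply/funext => n; apply/propext.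
  by split=> -[n_gt0 Vn n_min];
    (split=> // [|m m_gt0 /memS]; [exact/memS | exact: n_min]).
by rewrite iterS_phi.
Qed.

Fixpoint visit_time {X : Type} (T : X -> X) (U : set X) (y : X) (n : nat) : nat :=
  if n is n'.+1 then
    (visit_time T U y n' + return_time T U (iter (visit_time T U y n') T y))%N
  else 0%N.

Lemma visit_timeS (X : Type) (T : X -> X) (U : set X) y n :
  visit_time T U y n.+1 =
    (visit_time T U y n + return_time T U (iter (visit_time T U y n) T y))%N.
Proof. by []. Qed.

Lemma iter_induced (X : Type) (T : X -> X) (U : set X) y n :
  iter n (induced T U) y = iter (visit_time T U y n) T y.
Proof. by elim: n => //= n ->; rewrite /induced -iterD addnC. Qed.

Section InducedInduced.
Variables (X : Type) (T : X -> X) (U : set X).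
Hypothesis returnsU : returns_to T U.
Variable y : X.
Hypothesis Uy : U y.
Local Notation s := (visit_time T U y).

Lemma visit_time_mem n : U (iter (s n) T y).
Proof.
rewrite -iter_induced; elim: n => //= n IH.
by have [_ + _] := return_timeP (returnsU IH).
Qed.

Lemma visit_time_ltS n : (s n < s n.+1)%N.
Proof.
rewrite visit_timeS -[X in (X < _)%N]addn0 ltn_add2l.
by case: (return_timeP (returnsU (visit_time_mem n))).
Qed.

Lemma leq_visit_time : {mono s : m n / (m <= n)%N}.
Proof. by apply: leq_mono; apply: homo_ltn visit_time_ltS; exact: ltn_trans. Qed.

Lemma visit_time_ge n : (n <= s n)%N.
Proof. by elim: n => // n IH; apply: leq_ltn_trans IH (visit_time_ltS n). Qed.

(* Between two consecutive visits there is no visit, by minimality of the return time. *)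
Lemma visit_timeP m : (0 < m)%N -> U (iter m T y) -> exists2 n, (0 < n)%N & s n = m.
Proof.
move=> m_gt0 Um.
suff /(_ m.+1 (visit_time_ge m.+1)) [n sn] : forall N, (m < s N)%N -> exists n, s n = m.
  by exists n => //; case: n sn => [sn|//]; rewrite -sn in m_gt0.
elim=> [//|N IH lt_m_sN]; case: (ltnP m (s N)) => [/IH//|le_sN_m]; exists N.
apply/eqP; rewrite eqn_leq le_sN_m /= leqNgt; apply/negP => lt_sN_m.
have [_ _ rt_min] := return_timeP (returnsU (visit_time_mem N)).
have := rt_min (m - s N)%N; rewrite subn_gt0 lt_sN_m -iterD (subnK le_sN_m).
by move=> /(_ isT Um); rewrite visit_timeS in lt_m_sN; lia.
Qed.

Lemma induced_induced W : W `<=` U -> induced (induced T U) W y = induced T W y.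
Proof.
move=> WU.
change (iter (return_time (induced T U) W y) (induced T U) y =
        iter (return_time T W y) T y).
have [[t t_gt0 Wt]|never] := pselect (exists2 n, (0 < n)%N & W (iter n T y)).
  have [rt_gt0 Wrt rt_min] := return_timeP (ex_intro2 _ _ t t_gt0 Wt).
  have [n n_gt0 sn] := visit_timeP rt_gt0 (WU _ Wrt).
  have Wn : W (iter n (induced T U) y) by rewrite iter_induced sn.
  rewrite (return_time_eq n_gt0 Wn) ?iter_induced ?sn // => m m_gt0.
  rewrite iter_induced -leq_visit_time sn => Wm; apply: rt_min Wm.
  exact: leq_trans (visit_time_ge m).
have -> : return_time T W y = 0%N.
  by apply: return_time_eq0 => n n_gt0 Wn; apply: never; exists n.
suff -> : return_time (induced T U) W y = 0%N by [].
apply: return_time_eq0 => n n_gt0; rewrite iter_induced => Wn.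
by apply: never; exists (s n) => //; apply: leq_trans (visit_time_ge n).
Qed.

End InducedInduced.

Lemma subspace_continuous_comp (X Y Z : topologicalType) (A : set X) (B : set Y)
    (f : X -> Y) (h : Y -> Z) :
  {within A, continuous f} -> f @` A `<=` B -> {within B, continuous h} ->
  {within A, continuous (h \o f)}.
Proof.
move=> /subspace_continuousP cont_f fAB /subspace_continuousP cont_h.
apply/subspace_continuousP => x Ax; apply: cvg_trans (cont_h _ (fAB _ (imageP f Ax))).
have f_within : f @ within A (nbhs x) --> within B (nbhs (f x)).
  move=> W /= /(cont_f _ Ax); rewrite /within /= nbhs_simpl.
  by apply: (@filterS _ (nbhs x)) => z + Az => /(_ Az); apply; apply: fAB; exists z.
by apply: cvg_trans (cvg_fmap2 f_within).
Qed.

Section Conjugacy.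
Variable X : topologicalType.

Lemma conj_on_id (A : set X) (S : X -> X) : conj_on A A S S id.
Proof.
have cont_id : {within A, continuous (@id X)} by apply: continuous_subspaceT => x.
split=> //; last by exists id.
by split=> // x Ax; exists x.
Qed.

Lemma conj_on_comp (A B C : set X) (S R Q f h : X -> X) :
  conj_on A B S R f -> conj_on B C R Q h -> conj_on A C S Q (h \o f).
Proof.
move=> [bij_f cont_f [g [cont_g gK fK]] comm_f].
move=> [bij_h cont_h [k [cont_k kK hK]] comm_h].
have fAB : f @` A `<=` B := set_bij_sub bij_f.
have kCB : k @` C `<=` B.
  move=> _ [z Cz <-]; have [_ _ /(_ z Cz) [b Bb <-]] := bij_h.
  by rewrite kK ?in_setE.
have fB x : x \in A -> f x \in B by rewrite !in_setE => Ax; apply: fAB; exists x.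
have kB z : z \in C -> k z \in B by rewrite !in_setE => Cz; apply: kCB; exists z.
split.
- exact: set_bij_comp bij_f bij_h.
- exact: subspace_continuous_comp cont_f fAB cont_h.
- exists (g \o k); split.
  + exact: subspace_continuous_comp cont_k kCB cont_g.
  + by move=> x Ax /=; rewrite kK ?gK ?fB.
  + by move=> z Cz /=; rewrite fK ?hK ?kB.
- by move=> x Ax /=; rewrite comm_f ?comm_h ?fB.
Qed.

Lemma conj_on_induced (T phi : X -> X) (U A : set X) :
  conj_on [set: X] U T (induced T U) phi -> returns_to T U ->
  conj_on A (phi @` A) (induced T A) (induced T (phi @` A)) phi.
Proof.
move=> [[phiU phi_inj _] cont_phi [g [cont_g gK _]] comm] returnsU.
have phi_injT : injective phi by move=> x y; apply: phi_inj; rewrite in_setE.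
have commT x : phi (T x) = induced T U (phi x) by apply: comm; rewrite in_setE.
split.
- by apply: inj_bij => x y _ _; exact: phi_injT.
- by apply: continuous_subspaceT; apply/continuous_subspace_setT.
- exists g; split.
  + by apply: continuous_subspaceW cont_g => _ [x _ <-]; exact: phiU.
  + by move=> x _; rewrite gK ?in_setE.
  + by move=> _ /[!in_setE] -[x _ <-]; rewrite gK ?in_setE.
- move=> x _; rewrite -(induced_conj A phi_injT commT).
  by apply: induced_induced => //; [exact: phiU | move=> _ [z _ <-]; exact: phiU].
Qed.

End Conjugacy.

Lemma minimal_fixpoint (X : topologicalType) (T : X -> X) (x : X) :
  accessible_space X -> minimal_system T -> T x = x -> forall y : X, y = x.
Proof.
move=> T1 [[Tinv [TK _ _ _]] dense] Tx y.
have iterTx n : iter n T x = x by elim: n => //= n ->.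
have iterT_inj n : injective (iter n T).
  by elim: n => //= n IH a b /(can_inj TK) /IH.
have orbit_x : Defs.orbit T x = [set x].
  apply/seteqP; split=> z; last by move=> ->; exists 0%N; left.
  move=> [n [<-|Tz]]; first exact: iterTx.
  by apply: (iterT_inj n); rewrite Tz iterTx.
by apply: (accessible_closed_set1 T1); rewrite -orbit_x dense.
Qed.

Theorem mainTheorem10 (T : cantor_space -> cantor_space)
  (U : set cantor_space) (phi : cantor_space -> cantor_space) :
  minimal_system T ->
  clopen U -> U != [set: cantor_space] ->
  conj_on [set: cantor_space] U T (induced T U) phi ->
  forall k : nat,
    conj_on (iter k phi @` [set: cantor_space]) (iter k.+1 phi @` [set: cantor_space])
      (induced T (iter k phi @` [set: cantor_space]))
      (induced T (iter k.+1 phi @` [set: cantor_space])) phi /\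
    conj_on [set: cantor_space] (iter k phi @` [set: cantor_space])
      T (induced T (iter k phi @` [set: cantor_space])) (iter k phi).
Proof.
move=> minT _ _ conjU.
have [[_ phi_inj phi_surj] _ _ comm] := conjU.
have T_moves x : T x <> x.
  move=> /(minimal_fixpoint (hausdorff_accessible cantor_space_hausdorff) minT) single.
  have := single (fun=> true); rewrite -(single (fun=> false)).
  by move=> /(congr1 (fun f : cantor_space => f 0%N)).
have returnsU : returns_to T U.
  move=> y /phi_surj [x _ <-]; apply: returns_of_induced_neq.
  by rewrite -comm ?in_setE // => /phi_inj; rewrite !in_setE => /(_ I I); exact: T_moves.
pose V k := iter k phi @` [set: cantor_space].
have conj_step k : conj_on (V k) (V k.+1) (induced T (V k)) (induced T (V k.+1)) phi.
  have -> : V k.+1 = phi @` V k by rewrite /V image_comp.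
  exact: conj_on_induced conjU returnsU.
move=> k; split; first exact: conj_step.
elim: k => [|k IH]; last exact: conj_on_comp IH (conj_step k).
have -> : iter 0 phi @` [set: cantor_space] = [set: cantor_space] := image_id _.
by rewrite induced_setT; exact: conj_on_id.
Qed.
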